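(* Let $P,T:\mathbb{Z}\to\mathrm{GL}(2,\mathbb{R})$ be cohomologous via a conjugacy sequence $Q:\mathbb{Z}\to\mathrm{GL}(2,\mathbb{R})$, i.e. $P(i)=Q(i+1)T(i)Q(i)^{-1}$ for all $i\in\mathbb{Z}$. Assume there exist constants $C_1,C_2$ with $C_1>\sigma_1(Q(i))\ge\sigma_2(Q(i))>C_2>0$ for all $i\in\mathbb{Z}$, where $\sigma_1(Q(i))\ge\sigma_2(Q(i))$ are the singular values of $Q(i)$. Then $P$ admits a dominated splitting if and only if $T$ admits a dominated splitting.
   Context: For a cocycle $A:\mathbb{Z}\to\mathrm{GL}(2,\mathbb{R})$ define $A_n(i)=A(i+n-1)\cdots A(i)$ for $n\ge1$. $\mathbb{RP}^1$ is the space of one-dimensional subspaces of $\mathbb{R}^2$ with the natural $\mathrm{GL}(2,\mathbb{R})$-action and metric $d(\bar u,\bar v)=\sqrt{1-(\langle u,v\rangle/(\|u\|\|v\|))^2}$; norms are Euclidean / operator norms. A cocycle $A:\mathbb{Z}\to\mathrm{GL}(2,\mathbb{R})$ admits a dominated splitting if $\sup_i\|A(i)\|<\infty$ and there exist maps $s,u:\mathbb{Z}\to\mathbb{RP}^1$ with: (DS1) $A(i)u(i)=u(i+1)$, $A(i)s(i)=s(i+1)$ for all $i$; (DS2) there exist $N\in\mathbb{N}$, $\eta>1$ with $\|A_N(i)\vec u\|>\eta\|A_N(i)\vec s\|$ for all $i$ and all unit vectors $\vec u\in u(i)$, $\vec s\in s(i)$; (DS3) there is $\delta>0$ with $d(u(i),s(i))>\delta$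 for all $i$; (DS4) for that $N$, $\inf_{i\in\mathbb{Z}}\|A_N(i)\|>0$. *)

From Stdlib Require Import Reals Lra ZArith.
From Coquelicot Require Import Coquelicot.
Open Scope R_scope.

Definition vec := (R * R)%type.
Record mat := Mat { m11 : R; m12 : R; m21 : R; m22 : R }.

Definition vzero : vec := (0, 0).
Definition vscal (t : R) (v : vec) : vec := (t * fst v, t * snd v).
Definition vdot (v w : vec) : R := fst v * fst w + snd v * snd w.
Definition vnorm (v : vec) : R := sqrt (vdot v v).

Definition mapply (A : mat) (v : vec) : vec :=
  (m11 A * fst v + m12 A * snd v, m21 A * fst v + m22 A * snd v).
Definition mmul (A B : mat) : mat :=
  Mat (m11 A * m11 B + m12 A * m21 B) (m11 A * m12 B + m12 A * m22 B)
      (m21 A * m11 B + m22 A * m21 B) (m21 A * m12 B + m22 A * m22 B).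
Definition mid : mat := Mat 1 0 0 1.
Definition mdet (A : mat) : R := m11 A * m22 A - m12 A * m21 A.
Definition mtr (A : mat) : R := m11 A + m22 A.
Definition mtrans (A : mat) : mat := Mat (m11 A) (m21 A) (m12 A) (m22 A).
(* inverse (meaningful when det <> 0) *)
Definition minv (A : mat) : mat :=
  let d := mdet A in Mat (m22 A / d) (- m12 A / d) (- m21 A / d) (m11 A / d).
Definition inGL2 (A : mat) : Prop := mdet A <> 0.

Definition opnorm (A : mat) : R :=
  real (Lub_Rbar (fun r => exists v, vnorm v = 1 /\ r = vnorm (mapply A v))).

(* Singular values: square roots of the eigenvalues of A^T A, sigma1 >= sigma2.
   For the symmetric 2x2 matrix S = A^T A the eigenvalues are
   (tr S +- sqrt (tr S^2 - 4 det S)) / 2. *)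
Definition sing1 (A : mat) : R :=
  let S := mmul (mtrans A) A in
  sqrt ((mtr S + sqrt (mtr S ^ 2 - 4 * mdet S)) / 2).
Definition sing2 (A : mat) : R :=
  let S := mmul (mtrans A) A in
  sqrt ((mtr S - sqrt (mtr S ^ 2 - 4 * mdet S)) / 2).

Fixpoint cprod (A : Z -> mat) (n : nat) (i : Z) : mat :=
  match n with
  | O => mid
  | S k => mmul (A (i + Z.of_nat k)%Z) (cprod A k i)
  end.

(* RP^1: one-dimensional subspaces, represented by a nonzero spanning vector *)
Definition RP1 := { v : vec | v <> vzero }.
Definition in_line (L : RP1) (w : vec) : Prop := exists t, w = vscal t (proj1_sig L).
Definition act_eq (A : mat) (L L' : RP1) : Prop :=
  forall w, in_line L' w <-> exists v, in_line L v /\ w = mapply A v.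
(* the metric d on RP^1 (independent of the representatives) *)
Definition dRP1 (L L' : RP1) : R :=
  let u := proj1_sig L in let v := proj1_sig L' in
  sqrt (1 - (vdot u v / (vnorm u * vnorm v)) ^ 2).

Definition dominated_splitting (A : Z -> mat) : Prop :=
  (exists M, forall i, opnorm (A i) <= M) /\
  exists (s u : Z -> RP1) (N : nat) (eta : R),
    (forall i, act_eq (A i) (u i) (u (i + 1)%Z) /\ act_eq (A i) (s i) (s (i + 1)%Z)) /\
    (1 <= N)%nat /\ 1 < eta /\
    (forall i uv sv, in_line (u i) uv -> vnorm uv = 1 ->
        in_line (s i) sv -> vnorm sv = 1 ->
        vnorm (mapply (cprod A N i) uv) > eta * vnorm (mapply (cprod A N i) sv)) /\
    (exists delta, 0 < delta /\ forall i, dRP1 (u i) (s i) > delta) /\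
    (exists c, 0 < c /\ forall i, c <= opnorm (cprod A N i)).

From Stdlib Require Import Reals ZArith Lia Lra Psatz.
From Coquelicot Require Import Coquelicot.
Open Scope R_scope.

(* Write P(i) Q(i) = Q(i+1) T(i) with a |v| <= |Q(i) v| <= b |v| (the singular value bounds).
   Q carries the invariant line fields of T to invariant line fields of P.  Conjugation changes
   the norm of an iterate by at most the factor b/a at each end, so the expansion ratio between
   the two lines drops by at most (b/a)^2; passing from N to K N with eta^K > (b/a)^2 restores
   domination.  Angles shrink by at most (a/b)^2 because |det Q| >= a^2.  For the lower bound on
   the norms of the iterates: the unstable line is expanded at least as much as the stable one
   and the two are delta apart, so the norm of A_N is attained on the unstable line up to the
   factor 2/delta; hence the unstable line grows at least like (c delta / 2)^K under A_(K N),
   and Q distorts this by a bounded factor.  The converse uses Q^-1. *)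

Definition vadd (v w : vec) : vec := (fst v + fst w, snd v + snd w).
Definition vdet (v w : vec) : R := fst v * snd w - snd v * fst w.

Lemma sqr_le_reg x y : 0 <= y -> x * x <= y * y -> x <= y.
Proof. intros Hy H. apply Rsqr_incr_0_var; unfold Rsqr; lra. Qed.

Lemma vdot_ge0 v : 0 <= vdot v v.
Proof. unfold vdot; nra. Qed.

Lemma vnorm_ge0 v : 0 <= vnorm v.
Proof. apply sqrt_pos. Qed.

Lemma vnorm_sq v : vnorm v * vnorm v = vdot v v.
Proof. apply sqrt_sqrt, vdot_ge0. Qed.

Lemma vnorm_zero : vnorm vzero = 0.
Proof. unfold vnorm, vdot, vzero; simpl. rewrite Rmult_0_l, Rplus_0_l. apply sqrt_0. Qed.

Lemma vnorm_e1 : vnorm (1, 0) = 1.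
Proof. unfold vnorm, vdot; simpl. rewrite Rmult_1_l, Rmult_0_l, Rplus_0_r. apply sqrt_1. Qed.

Lemma vnorm_eq0 v : vnorm v = 0 -> v = vzero.
Proof.
  intro H. pose proof (vnorm_sq v) as Hsq. rewrite H in Hsq.
  destruct v as [x y]; unfold vdot in Hsq; simpl in Hsq.
  unfold vzero; f_equal; nra.
Qed.

Lemma vnorm_pos v : v <> vzero -> 0 < vnorm v.
Proof.
  intro H. destruct (vnorm_ge0 v) as [Hv|Hv]; [exact Hv|].
  exfalso; apply H, vnorm_eq0; auto.
Qed.

Lemma vnorm_scal t v : vnorm (vscal t v) = Rabs t * vnorm v.
Proof.
  unfold vnorm. rewrite <- sqrt_Rsqr_abs, <- sqrt_mult_alt by apply Rle_0_sqr.
  f_equal. destruct v; unfold vdot, vscal, Rsqr; simpl; ring.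
Qed.

Lemma vdot_le v w : vdot v w <= vnorm v * vnorm w.
Proof.
  pose proof (vnorm_sq v); pose proof (vnorm_sq w).
  pose proof (vnorm_ge0 v); pose proof (vnorm_ge0 w).
  destruct (Rle_lt_dec (vdot v w) 0) as [Hneg|Hpos]; [nra|].
  apply sqr_le_reg; [nra|].
  destruct v as [x y], w as [x' y']; unfold vdot in *; simpl in *.
  pose proof (Rle_0_sqr (x * y' - y * x')); unfold Rsqr in *. nra.
Qed.

Lemma vnorm_add v w : vnorm (vadd v w) <= vnorm v + vnorm w.
Proof.
  pose proof (vdot_le v w) as Hcs.
  pose proof (vnorm_sq v); pose proof (vnorm_sq w); pose proof (vnorm_sq (vadd v w)).
  pose proof (vnorm_ge0 v); pose proof (vnorm_ge0 w).
  apply sqr_le_reg; [lra|].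
  destruct v as [x y], w as [x' y']; unfold vdot, vadd in *; simpl in *.
  nra.
Qed.

Lemma vdet_bound v w : Rabs (vdet v w) <= vnorm v * vnorm w.
Proof.
  pose proof (vnorm_sq v); pose proof (vnorm_sq w).
  pose proof (vnorm_ge0 v); pose proof (vnorm_ge0 w).
  apply sqr_le_reg; [nra|].
  rewrite <- Rabs_mult, Rabs_pos_eq by apply Rle_0_sqr.
  replace (vnorm v * vnorm w * (vnorm v * vnorm w)) with (vdot v v * vdot w w) by nra.
  destruct v as [x y], w as [x' y']; unfold vdot, vdet; simpl.
  pose proof (Rle_0_sqr (x * x' + y * y')); unfold Rsqr in *. nra.
Qed.

Lemma mapply_scal A t v : mapply A (vscal t v) = vscal t (mapply A v).
Proof. destruct v; unfold mapply, vscal; simpl; f_equal; ring. Qed.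

Lemma mapply_add A v w : mapply A (vadd v w) = vadd (mapply A v) (mapply A w).
Proof. destruct v, w; unfold mapply, vadd; simpl; f_equal; ring. Qed.

Lemma mapply_mmul A B v : mapply (mmul A B) v = mapply A (mapply B v).
Proof. destruct v, A, B; unfold mapply, mmul; simpl; f_equal; ring. Qed.

Lemma mapply_mid v : mapply mid v = v.
Proof. destruct v; unfold mapply, mid; simpl; f_equal; ring. Qed.

Lemma mapply_minv_r A v : mdet A <> 0 -> mapply A (mapply (minv A) v) = v.
Proof.
  intro H. destruct A, v; unfold minv, mapply, mdet in *; simpl in *; f_equal; field; auto.
Qed.

Lemma mapply_minv_l A v : mdet A <> 0 -> mapply (minv A) (mapply A v) = v.
Proof.
  intro H. destruct A, v; unfold minv, mapply, mdet in *; simpl in *; f_equal; field; auto.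
Qed.

Lemma vdet_mapply A v w : vdet (mapply A v) (mapply A w) = mdet A * vdet v w.
Proof. destruct v, w, A; unfold vdet, mapply, mdet; simpl; ring. Qed.

Lemma vdet_scal s t v w : vdet (vscal s v) (vscal t w) = s * t * vdet v w.
Proof. destruct v, w; unfold vdet, vscal; simpl; ring. Qed.

Lemma vdet_decomp u s w :
  vscal (vdet u s) w = vadd (vscal (vdet w s) u) (vscal (vdet u w) s).
Proof. destruct u, s, w; unfold vscal, vadd, vdet; simpl; f_equal; ring. Qed.

Lemma mapply_neq0 A v : mdet A <> 0 -> v <> vzero -> mapply A v <> vzero.
Proof.
  intros HA Hv E. apply Hv.
  rewrite <- (mapply_minv_l A v HA), E. unfold mapply, vzero; simpl; f_equal; ring.
Qed.

Lemma opnorm_spec A :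
  (forall v, vnorm v = 1 -> vnorm (mapply A v) <= opnorm A) /\
  (forall K, (forall v, vnorm v = 1 -> vnorm (mapply A v) <= K) -> opnorm A <= K).
Proof.
  unfold opnorm.
  set (E := fun r => exists v, vnorm v = 1 /\ r = vnorm (mapply A v)).
  destruct (Lub_Rbar_correct E) as [Hub Hlub].
  destruct A as [p q r s].
  set (B := 1 + (p * p + q * q + r * r + s * s)).
  assert (HB : is_ub_Rbar E B).
  { intros z [[x y] [Hv ->]]. simpl.
    pose proof (vnorm_sq (x, y)) as Hxy. rewrite Hv in Hxy. unfold vdot in Hxy; simpl in Hxy.
    apply sqr_le_reg; [unfold B; nra|].
    rewrite vnorm_sq. unfold vdot, mapply, B; simpl.
    pose proof (Rle_0_sqr (p * y - q * x)); pose proof (Rle_0_sqr (r * y - s * x)).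
    unfold Rsqr in *. nra. }
  assert (HE : E (vnorm (mapply (Mat p q r s) (1, 0))))
    by (exists (1, 0); split; [apply vnorm_e1 | auto]).
  pose proof (Hlub _ HB) as H1. pose proof (Hub _ HE) as H2.
  destruct (Lub_Rbar E) as [l| |]; simpl in *; try contradiction.
  split.
  - intros v Hv. apply (Hub (vnorm (mapply _ v))). exists v; auto.
  - intros K HK. apply (Hlub (Finite K)). intros z [v [Hv ->]]. simpl. apply HK; auto.
Qed.

Lemma opnorm_ge A v : vnorm v = 1 -> vnorm (mapply A v) <= opnorm A.
Proof. apply opnorm_spec. Qed.

Lemma opnorm_le A K : (forall v, vnorm v = 1 -> vnorm (mapply A v) <= K) -> opnorm A <= K.
Proof. apply opnorm_spec. Qed.

Lemma opnorm_ge0 A : 0 <= opnorm A.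
Proof. eapply Rle_trans; [apply vnorm_ge0|apply (opnorm_ge A (1, 0) vnorm_e1)]. Qed.

Lemma vnorm_mapply_le A v : vnorm (mapply A v) <= opnorm A * vnorm v.
Proof.
  destruct (vnorm_ge0 v) as [Hn|H0].
  - set (w := vscal (/ vnorm v) v).
    assert (Hunit : vnorm w = 1).
    { unfold w. rewrite vnorm_scal, Rabs_pos_eq by (left; apply Rinv_0_lt_compat; lra).
      field; lra. }
    assert (Hvw : v = vscal (vnorm v) w)
      by (unfold w; destruct v; unfold vscal; simpl; f_equal; field; lra).
    rewrite Hvw at 1. rewrite mapply_scal, vnorm_scal, Rabs_pos_eq by lra.
    pose proof (opnorm_ge A _ Hunit). nra.
  - symmetry in H0. rewrite H0, (vnorm_eq0 v H0), Rmult_0_r.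
    unfold mapply, vzero; simpl. rewrite !Rmult_0_r, Rplus_0_r. apply Req_le, vnorm_zero.
Qed.

Lemma sqrt_mul_le l x y : 0 <= x -> 0 <= y -> l * (x * x) <= y * y -> sqrt l * x <= y.
Proof.
  intros Hx Hy H. destruct (Rle_lt_dec l 0) as [Hl|Hl].
  - rewrite sqrt_neg_0 by exact Hl. lra.
  - pose proof (sqrt_sqrt l (Rlt_le _ _ Hl)). pose proof (sqrt_pos l).
    apply sqr_le_reg; [exact Hy|]. nra.
Qed.

Lemma le_sqrt_mul l x y : 0 <= x -> 0 <= y -> y * y <= l * (x * x) -> y <= sqrt l * x.
Proof.
  intros Hx Hy H. pose proof (sqrt_pos l).
  destruct (Rle_lt_dec l 0) as [Hl|Hl].
  - assert (y = 0) by nra. subst y. apply Rmult_le_pos; lra.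
  - pose proof (sqrt_sqrt l (Rlt_le _ _ Hl)).
    apply sqr_le_reg; [apply Rmult_le_pos; lra|]. nra.
Qed.

Lemma psd_form_nonneg al ga r x y :
  0 <= al -> 0 <= ga -> al * ga = r * r -> 0 <= al * x * x - 2 * r * x * y + ga * y * y.
Proof.
  intros Hal Hga Hr. destruct Hal as [Hal|<-].
  - assert (al * (al * x * x - 2 * r * x * y + ga * y * y) = (al * x - r * y) * (al * x - r * y))
      by nra.
    pose proof (Rle_0_sqr (al * x - r * y)); unfold Rsqr in *. nra.
  - assert (r = 0) by nra. subst r. nra.
Qed.

(* The eigenvalues of [[p, r], [r, q]] are (p + q -/+ s) / 2. *)
Lemma sym_form_bounds p q r x y :
  let s := sqrt ((p - q) ^ 2 + 4 * r ^ 2) in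
  (p + q - s) / 2 * (x * x + y * y) <= p * x * x + 2 * r * x * y + q * y * y <=
  (p + q + s) / 2 * (x * x + y * y).
Proof.
  intro s.
  assert (Hs : s * s = (p - q) ^ 2 + 4 * r ^ 2)
    by (apply sqrt_sqrt; pose proof (Rle_0_sqr (p - q)); pose proof (Rle_0_sqr r);
        unfold Rsqr in *; nra).
  assert (Hs0 : 0 <= s) by apply sqrt_pos.
  assert (Hpq : (p - q) * (p - q) <= s * s) by (pose proof (Rle_0_sqr r); unfold Rsqr in *; nra).
  assert (p - q <= s) by (apply sqr_le_reg; lra).
  assert (q - p <= s) by (apply sqr_le_reg; nra).
  assert (Hprod : (s + (p - q)) / 2 * ((s - (p - q)) / 2) = r * r).
  { replace ((s + (p - q)) / 2 * ((s - (p - q)) / 2)) with ((s * s - (p - q) ^ 2) / 4) by field.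
    rewrite Hs. field. }
  split.
  - pose proof (psd_form_nonneg ((s + (p - q)) / 2) ((s - (p - q)) / 2) (- r) x y
                  ltac:(lra) ltac:(lra) ltac:(rewrite Hprod; ring)). nra.
  - pose proof (psd_form_nonneg ((s - (p - q)) / 2) ((s + (p - q)) / 2) r x y
                  ltac:(lra) ltac:(lra) ltac:(rewrite Rmult_comm; exact Hprod)). nra.
Qed.

Lemma sing_bounds A v :
  sing2 A * vnorm v <= vnorm (mapply A v) <= sing1 A * vnorm v.
Proof.
  destruct A as [a b c d], v as [x y]. unfold sing1, sing2; cbv zeta.
  set (p := a * a + c * c). set (q := b * b + d * d). set (r := a * b + c * d).
  replace (mtr (mmul (mtrans (Mat a b c d)) (Mat a b c d))) with (p + q)
    by (unfold p, q, mtr, mmul, mtrans; simpl; ring).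
  replace ((p + q) ^ 2 - 4 * mdet (mmul (mtrans (Mat a b c d)) (Mat a b c d)))
    with ((p - q) ^ 2 + 4 * r ^ 2) by (unfold p, q, r, mdet, mmul, mtrans; simpl; ring).
  assert (Hv : vnorm (x, y) * vnorm (x, y) = x * x + y * y)
    by (rewrite vnorm_sq; unfold vdot; simpl; ring).
  assert (HAv : vnorm (mapply (Mat a b c d) (x, y)) * vnorm (mapply (Mat a b c d) (x, y)) =
                p * x * x + 2 * r * x * y + q * y * y)
    by (rewrite vnorm_sq; unfold vdot, mapply, p, q, r; simpl; ring).
  destruct (sym_form_bounds p q r x y) as [Hlo Hhi].
  split; [apply sqrt_mul_le | apply le_sqrt_mul]; try apply vnorm_ge0; rewrite Hv, HAv; lra.
Qed.

Lemma sing_bounds_lt A C1 C2 v :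
  sing1 A < C1 -> C2 < sing2 A -> C2 * vnorm v <= vnorm (mapply A v) <= C1 * vnorm v.
Proof. intros H1 H2. pose proof (sing_bounds A v); pose proof (vnorm_ge0 v). nra. Qed.

Lemma psd_det al be ga :
  (forall x y, 0 <= al * x * x + 2 * be * x * y + ga * y * y) -> be * be <= al * ga.
Proof.
  intro H. pose proof (H 1 0) as Hal. pose proof (H 0 1) as Hga.
  destruct (Rle_lt_or_eq_dec 0 al ltac:(lra)) as [Hpos|<-].
  - pose proof (H be (- al)) as Hq.
    assert (0 <= al * (al * ga - be * be)) by nra.
    apply Rmult_le_reg_l with al; nra.
  - destruct (Req_dec be 0) as [->|Hbe]; [lra|].
    pose proof (H (- (ga + 1) / (2 * be)) 1) as Hq.
    replace (0 * (- (ga + 1) / (2 * be)) * (- (ga + 1) / (2 * be)) +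
             2 * be * (- (ga + 1) / (2 * be)) * 1 + ga * 1 * 1) with (-1) in Hq
      by (field; exact Hbe).
    lra.
Qed.

Lemma mdet_lower A a :
  0 <= a -> (forall v, a * vnorm v <= vnorm (mapply A v)) -> a * a <= Rabs (mdet A).
Proof.
  intros Ha H. destruct A as [p q r s].
  assert (Hform : forall x y, 0 <= (p * p + r * r - a * a) * x * x + 2 * (p * q + r * s) * x * y
                               + (q * q + s * s - a * a) * y * y).
  { intros x y.
    assert (Hsq : a * a * vdot (x, y) (x, y) <=
                  vdot (mapply (Mat p q r s) (x, y)) (mapply (Mat p q r s) (x, y))).
    { rewrite <- !vnorm_sq. pose proof (H (x, y)); pose proof (vnorm_ge0 (x, y)).
      apply Rle_trans with (a * vnorm (x, y) * (a * vnorm (x, y))); [lra|].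
      apply Rmult_le_compat; nra. }
    unfold vdot, mapply in Hsq; simpl in Hsq. nra. }
  pose proof (psd_det _ _ _ Hform) as Hdet.
  pose proof (Hform 1 0); pose proof (Hform 0 1).
  apply sqr_le_reg; [apply Rabs_pos|].
  rewrite <- Rabs_mult, Rabs_pos_eq by apply Rle_0_sqr.
  unfold mdet; simpl. nra.
Qed.

Definition urep (L : RP1) : vec := vscal (/ vnorm (proj1_sig L)) (proj1_sig L).

Lemma urep_unit L : vnorm (urep L) = 1.
Proof.
  pose proof (vnorm_pos _ (proj2_sig L)). unfold urep.
  rewrite vnorm_scal, Rabs_pos_eq by (left; apply Rinv_0_lt_compat; lra). field; lra.
Qed.

Lemma urep_line L : in_line L (urep L).
Proof. exists (/ vnorm (proj1_sig L)). reflexivity. Qed.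

Lemma vnorm_mapply_line A L x :
  in_line L x -> vnorm (mapply A x) = vnorm x * vnorm (mapply A (urep L)).
Proof.
  intros [t ->]. pose proof (vnorm_pos _ (proj2_sig L)).
  replace (vscal t (proj1_sig L)) with (vscal (t * vnorm (proj1_sig L)) (urep L))
    by (unfold urep; destruct (proj1_sig L); unfold vscal; simpl; f_equal; field; lra).
  rewrite mapply_scal, !vnorm_scal, urep_unit. ring.
Qed.

Lemma dRP1_vdet L L' :
  dRP1 L L' =
  Rabs (vdet (proj1_sig L) (proj1_sig L')) / (vnorm (proj1_sig L) * vnorm (proj1_sig L')).
Proof.
  unfold dRP1. destruct L as [u Hu], L' as [v Hv]; cbn [proj1_sig].
  pose proof (vnorm_pos _ Hu); pose proof (vnorm_pos _ Hv).
  pose proof (vnorm_sq u); pose proof (vnorm_sq v).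
  assert (Hlag : vdot u v * vdot u v + vdet u v * vdet u v = vdot u u * vdot v v)
    by (destruct u, v; unfold vdot, vdet; simpl; ring).
  replace (Rabs (vdet u v) / (vnorm u * vnorm v)) with (Rabs (vdet u v / (vnorm u * vnorm v)))
    by (unfold Rdiv; rewrite Rabs_mult, Rabs_inv, (Rabs_pos_eq (vnorm u * vnorm v)) by nra;
        reflexivity).
  rewrite <- sqrt_Rsqr_abs. f_equal.
  unfold Rsqr. field_simplify; [|lra|lra]. f_equal. nra.
Qed.

Lemma dRP1_urep L L' : dRP1 L L' = Rabs (vdet (urep L) (urep L')).
Proof.
  rewrite dRP1_vdet. unfold urep. rewrite vdet_scal, !Rabs_mult.
  pose proof (vnorm_pos _ (proj2_sig L)); pose proof (vnorm_pos _ (proj2_sig L')).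
  rewrite !Rabs_inv, (Rabs_pos_eq (vnorm (proj1_sig L))), (Rabs_pos_eq (vnorm (proj1_sig L')))
    by lra.
  field. lra.
Qed.

Definition line_map (A : mat) (HA : mdet A <> 0) (L : RP1) : RP1 :=
  exist _ (mapply A (proj1_sig L)) (mapply_neq0 A _ HA (proj2_sig L)).

Lemma in_line_map A HA L w :
  in_line (line_map A HA L) w <-> exists x, in_line L x /\ w = mapply A x.
Proof.
  unfold in_line, line_map; cbn [proj1_sig]. split.
  - intros [t ->]. exists (vscal t (proj1_sig L)).
    split; [exists t; auto | now rewrite mapply_scal].
  - intros [x [[t ->] ->]]. exists t. now rewrite mapply_scal.
Qed.

Lemma act_eq_conj A B Q HQ Q' HQ' L L' :
  (forall v, mapply A (mapply Q v) = mapply Q' (mapply B v)) ->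
  act_eq B L L' -> act_eq A (line_map Q HQ L) (line_map Q' HQ' L').
Proof.
  intros Hconj HB w. rewrite !in_line_map. split.
  - intros [y [Hy ->]]. apply HB in Hy as [x [Hx ->]].
    exists (mapply Q x). split; [apply in_line_map; exists x; auto | now rewrite Hconj].
  - intros [v [Hv ->]]. apply in_line_map in Hv as [x [Hx ->]].
    exists (mapply B x). split; [apply HB; exists x; auto | now rewrite Hconj].
Qed.

Lemma dRP1_line_map A HA a b L L' :
  0 < a -> (forall v, a * vnorm v <= vnorm (mapply A v)) ->
  (forall v, vnorm (mapply A v) <= b * vnorm v) ->
  a * a / (b * b) * dRP1 L L' <= dRP1 (line_map A HA L) (line_map A HA L').
Proof.
  intros Ha Hlow Hup. rewrite !dRP1_vdet. unfold line_map; cbn [proj1_sig].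
  set (l := proj1_sig L); set (l' := proj1_sig L').
  pose proof (vnorm_pos _ (proj2_sig L)) as Hl; pose proof (vnorm_pos _ (proj2_sig L')) as Hl'.
  pose proof (vnorm_pos _ (mapply_neq0 A _ HA (proj2_sig L))) as Hm.
  pose proof (vnorm_pos _ (mapply_neq0 A _ HA (proj2_sig L'))) as Hm'.
  fold l l' in Hl, Hl', Hm, Hm'.
  pose proof (Hup l); pose proof (Hup l').
  pose proof (mdet_lower A a (Rlt_le _ _ Ha) Hlow) as Hdet.
  pose proof (Rabs_pos (vdet l l')) as Hd.
  assert (Hb : 0 < b) by nra.
  rewrite vdet_mapply, Rabs_mult.
  apply Rle_trans with (a * a * Rabs (vdet l l') / (vnorm (mapply A l) * vnorm (mapply A l'))).
  - replace (a * a / (b * b) * (Rabs (vdet l l') / (vnorm l * vnorm l')))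
      with (a * a * Rabs (vdet l l') * / ((b * vnorm l) * (b * vnorm l'))) by (field; lra).
    apply Rmult_le_compat_l; [nra|].
    apply Rinv_le_contravar; [nra|]. apply Rmult_le_compat; lra.
  - apply Rmult_le_compat_r; [left; apply Rinv_0_lt_compat; nra|]. nra.
Qed.

Lemma cprod_add A m n i v :
  mapply (cprod A (m + n) i) v = mapply (cprod A n (i + Z.of_nat m)) (mapply (cprod A m i) v).
Proof.
  induction n as [|n IH].
  - now rewrite Nat.add_0_r, mapply_mid.
  - rewrite Nat.add_succ_r. simpl cprod. rewrite !mapply_mmul, IH.
    do 2 f_equal. lia.
Qed.

Lemma cprod_cohom (P T Q : Z -> mat) :
  (forall i v, mapply (P i) (mapply (Q i) v) = mapply (Q (i + 1)%Z) (mapply (T i) v)) ->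
  forall n i v,
    mapply (cprod P n i) (mapply (Q i) v) = mapply (Q (i + Z.of_nat n)%Z) (mapply (cprod T n i) v).
Proof.
  intros Hcoh n. induction n as [|n IH]; intros i v.
  - simpl. rewrite !mapply_mid, Z.add_0_r. reflexivity.
  - simpl cprod. rewrite !mapply_mmul, IH, Hcoh.
    do 2 f_equal. lia.
Qed.

Definition invariant_line (A : Z -> mat) (L : Z -> RP1) : Prop :=
  forall i, act_eq (A i) (L i) (L (i + 1)%Z).

Lemma cprod_line A L : invariant_line A L ->
  forall n i x, in_line (L i) x -> in_line (L (i + Z.of_nat n)%Z) (mapply (cprod A n i) x).
Proof.
  intros HL n. induction n as [|n IH]; intros i x Hx.
  - simpl. now rewrite Z.add_0_r, mapply_mid.
  - simpl cprod. rewrite mapply_mmul.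
    replace (i + Z.of_nat (S n))%Z with (i + Z.of_nat n + 1)%Z by lia.
    apply HL. exists (mapply (cprod A n i) x). auto.
Qed.

Definition dominates (A : Z -> mat) (u s : Z -> RP1) (N : nat) (eta : R) : Prop :=
  forall i uv sv, in_line (u i) uv -> vnorm uv = 1 -> in_line (s i) sv -> vnorm sv = 1 ->
    vnorm (mapply (cprod A N i) uv) > eta * vnorm (mapply (cprod A N i) sv).

Lemma dominates_urep A u s N eta i : dominates A u s N eta ->
  eta * vnorm (mapply (cprod A N i) (urep (s i))) < vnorm (mapply (cprod A N i) (urep (u i))).
Proof. intro H. apply H; auto using urep_line, urep_unit. Qed.

Lemma dominates_iter A u s N eta :
  invariant_line A u -> invariant_line A s -> dominates A u s N eta -> 0 <= eta ->
  forall K i x y, in_line (u i) x -> in_line (s i) y ->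
    eta ^ K * vnorm (mapply (cprod A (K * N) i) y) * vnorm x <=
    vnorm (mapply (cprod A (K * N) i) x) * vnorm y.
Proof.
  intros Hu Hs Hdom Heta K. induction K as [|K IH]; intros i x y Hx Hy.
  - simpl. rewrite !mapply_mid. lra.
  - rewrite Nat.mul_succ_l, !cprod_add.
    set (j := (i + Z.of_nat (K * N))%Z).
    rewrite (vnorm_mapply_line _ (u j) (mapply (cprod A (K * N) i) x)) by (apply cprod_line; auto).
    rewrite (vnorm_mapply_line _ (s j) (mapply (cprod A (K * N) i) y)) by (apply cprod_line; auto).
    pose proof (dominates_urep _ _ _ _ _ j Hdom).
    pose proof (IH i x y Hx Hy).
    pose proof (pow_le _ K Heta).
    pose proof (vnorm_ge0 x); pose proof (vnorm_ge0 (mapply (cprod A (K * N) i) y)).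
    pose proof (vnorm_ge0 (mapply (cprod A N j) (urep (s j)))).
    simpl pow.
    apply Rle_trans with ((eta ^ K * vnorm (mapply (cprod A (K * N) i) y) * vnorm x) *
                          (eta * vnorm (mapply (cprod A N j) (urep (s j))))); [lra|].
    apply Rle_trans with ((vnorm (mapply (cprod A (K * N) i) x) * vnorm y) *
                          vnorm (mapply (cprod A N j) (urep (u j)))); [|lra].
    apply Rmult_le_compat; [repeat apply Rmult_le_pos; lra | apply Rmult_le_pos; lra | lra | lra].
Qed.

(* Expanding [d w] in the basis [ub, sb] with Cramer's rule bounds [B w] by [B ub] and [B sb]. *)
Lemma opnorm_two_lines B ub sb :
  vnorm ub = 1 -> vnorm sb = 1 -> vnorm (mapply B sb) <= vnorm (mapply B ub) ->
  Rabs (vdet ub sb) * opnorm B <= 2 * vnorm (mapply B ub).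
Proof.
  intros Hu Hs Hsu. set (d := Rabs (vdet ub sb)).
  destruct (Rabs_pos (vdet ub sb)) as [Hd|Hd].
  - assert (Hw : forall w, vnorm w = 1 -> d * vnorm (mapply B w) <= 2 * vnorm (mapply B ub)).
    { intros w Hw.
      pose proof (f_equal (mapply B) (vdet_decomp ub sb w)) as E.
      rewrite mapply_add, !mapply_scal in E.
      pose proof (vnorm_add (vscal (vdet w sb) (mapply B ub)) (vscal (vdet ub w) (mapply B sb))).
      rewrite <- E, !vnorm_scal in H.
      pose proof (vdet_bound w sb); pose proof (vdet_bound ub w).
      rewrite Hw, Hu, Hs in *.
      pose proof (vnorm_ge0 (mapply B ub)); pose proof (vnorm_ge0 (mapply B sb)).
      fold d in H. nra. }
    assert (opnorm B <= 2 * vnorm (mapply B ub) / d).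
    { apply opnorm_le. intros w Hw1. apply Rmult_le_reg_l with d; [exact Hd|].
      replace (d * (2 * vnorm (mapply B ub) / d)) with (2 * vnorm (mapply B ub))
        by (field; apply Rgt_not_eq; exact Hd).
      auto. }
    apply Rmult_le_reg_r with (/ d); [apply Rinv_0_lt_compat; exact Hd|].
    replace (d * opnorm B * / d) with (opnorm B) by (field; apply Rgt_not_eq; exact Hd). exact H.
  - fold d in Hd. rewrite <- Hd, Rmult_0_l. pose proof (vnorm_ge0 (mapply B ub)). lra.
Qed.

Lemma dominates_growth A u s N eta delta c :
  invariant_line A u -> dominates A u s N eta -> 1 <= eta -> 0 <= c -> 0 <= delta ->
  (forall i, dRP1 (u i) (s i) > delta) -> (forall i, c <= opnorm (cprod A N i)) ->
  forall K i x, in_line (u i) x ->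
    (c * delta / 2) ^ K * vnorm x <= vnorm (mapply (cprod A (K * N) i) x).
Proof.
  intros Hu Hdom Heta Hc Hdelta Hangle Hnorm.
  assert (Hbase : forall j, c * delta / 2 <= vnorm (mapply (cprod A N j) (urep (u j)))).
  { intro j. pose proof (dominates_urep _ _ _ _ _ j Hdom).
    pose proof (vnorm_ge0 (mapply (cprod A N j) (urep (s j)))).
    pose proof (opnorm_two_lines (cprod A N j) _ _ (urep_unit (u j)) (urep_unit (s j))
                  ltac:(nra)) as Htwo.
    rewrite <- dRP1_urep in Htwo.
    pose proof (Hangle j); pose proof (Hnorm j).
    assert (c * delta <= opnorm (cprod A N j) * dRP1 (u j) (s j)) by (apply Rmult_le_compat; lra).
    nra. }
  intro K. induction K as [|K IH]; intros i x Hx.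
  - simpl. rewrite mapply_mid. lra.
  - rewrite Nat.mul_succ_l, cprod_add.
    set (j := (i + Z.of_nat (K * N))%Z).
    rewrite (vnorm_mapply_line _ (u j) (mapply (cprod A (K * N) i) x)) by (apply cprod_line; auto).
    pose proof (IH i x Hx); pose proof (Hbase j).
    pose proof (vnorm_ge0 x); pose proof (pow_le (c * delta / 2) K ltac:(nra)).
    apply Rle_trans with ((c * delta / 2) ^ K * vnorm x * (c * delta / 2)); [simpl; lra|].
    apply Rmult_le_compat; [apply Rmult_le_pos; lra | nra | lra | lra].
Qed.

Lemma pow_exceeds eta M : 1 < eta -> exists K, (1 <= K)%nat /\ M < eta ^ K.
Proof.
  intro Heta. destruct (Pow_x_infinity eta ltac:(rewrite Rabs_pos_eq; lra) (M + 1)) as [K0 HK0].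
  exists (S K0). split; [lia|].
  specialize (HK0 (S K0) ltac:(lia)). rewrite Rabs_pos_eq in HK0 by (apply pow_le; lra). lra.
Qed.

Lemma dominates_of_le A u s N E m :
  1 < E -> 0 < m ->
  (forall i uv sv, in_line (u i) uv -> vnorm uv = 1 -> in_line (s i) sv -> vnorm sv = 1 ->
     E * vnorm (mapply (cprod A N i) sv) <= vnorm (mapply (cprod A N i) uv)) ->
  (forall i uv, in_line (u i) uv -> vnorm uv = 1 -> m <= vnorm (mapply (cprod A N i) uv)) ->
  dominates A u s N ((1 + E) / 2).
Proof.
  intros HE Hm Hle Hlow i uv sv Hu Hnu Hs Hns.
  pose proof (Hle i uv sv Hu Hnu Hs Hns); pose proof (Hlow i uv Hu Hnu).
  pose proof (vnorm_ge0 (mapply (cprod A N i) sv)).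
  nra.
Qed.

Section Cohomologous.

Variables (P T Q : Z -> mat) (a b : R).
Hypothesis Ha : 0 < a.
Hypothesis HQ_lower : forall i v, a * vnorm v <= vnorm (mapply (Q i) v).
Hypothesis HQ_upper : forall i v, vnorm (mapply (Q i) v) <= b * vnorm v.
Hypothesis Hcoh :
  forall i v, mapply (P i) (mapply (Q i) v) = mapply (Q (i + 1)%Z) (mapply (T i) v).

Lemma Q_det_neq0 i : mdet (Q i) <> 0.
Proof.
  pose proof (mdet_lower (Q i) a (Rlt_le _ _ Ha) (HQ_lower i)).
  intro H0. rewrite H0, Rabs_R0 in H. nra.
Qed.

Lemma b_pos : 0 < b.
Proof.
  pose proof (HQ_lower 0 (1, 0)); pose proof (HQ_upper 0 (1, 0)). rewrite vnorm_e1 in *. lra.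
Qed.

Lemma preimage_unit_bounds i x : vnorm (mapply (Q i) x) = 1 -> 1 <= b * vnorm x /\ a * vnorm x <= 1.
Proof. intro H. pose proof (HQ_lower i x); pose proof (HQ_upper i x). lra. Qed.

Lemma cohom_bounded :
  (exists M, forall i, opnorm (T i) <= M) -> exists M, forall i, opnorm (P i) <= M.
Proof.
  intros [M HM]. exists (b * M / a). intro i. apply opnorm_le. intros w Hw.
  set (v := mapply (minv (Q i)) w).
  assert (Hwv : w = mapply (Q i) v) by (symmetry; apply mapply_minv_r, Q_det_neq0).
  rewrite Hwv in Hw |- *. rewrite Hcoh.
  destruct (preimage_unit_bounds i v Hw) as [_ Hv].
  assert (HM0 : 0 <= M) by (pose proof (opnorm_ge0 (T i)); pose proof (HM i); lra).
  pose proof b_pos.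
  apply Rle_trans with (b * vnorm (mapply (T i) v)); [apply HQ_upper|].
  apply Rle_trans with (b * (M * vnorm v)).
  { apply Rmult_le_compat_l; [lra|]. eapply Rle_trans; [apply vnorm_mapply_le|].
    apply Rmult_le_compat_r; [apply vnorm_ge0 | apply HM]. }
  apply Rmult_le_reg_l with a; [exact Ha|].
  replace (a * (b * M / a)) with (b * M * 1) by (field; lra).
  replace (a * (b * (M * vnorm v))) with (b * M * (a * vnorm v)) by ring.
  apply Rmult_le_compat_l; nra.
Qed.

Definition conj_line (L : Z -> RP1) (i : Z) : RP1 := line_map (Q i) (Q_det_neq0 i) (L i).

Lemma conj_line_invariant L : invariant_line T L -> invariant_line P (conj_line L).
Proof. intros HL i. apply act_eq_conj with (B := T i); [apply Hcoh | apply HL]. Qed.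

Lemma conj_line_dist L L' i :
  a * a / (b * b) * dRP1 (L i) (L' i) <= dRP1 (conj_line L i) (conj_line L' i).
Proof. apply dRP1_line_map; auto. Qed.

Lemma cohom_ratio n u s rho :
  0 <= rho ->
  (forall i x y, in_line (u i) x -> in_line (s i) y ->
     rho * vnorm (mapply (cprod T n i) y) * vnorm x <= vnorm (mapply (cprod T n i) x) * vnorm y) ->
  forall i uv sv, in_line (conj_line u i) uv -> vnorm uv = 1 ->
    in_line (conj_line s i) sv -> vnorm sv = 1 ->
    a * a * rho / (b * b) * vnorm (mapply (cprod P n i) sv) <= vnorm (mapply (cprod P n i) uv).
Proof.
  intros Hrho Hratio i uv sv Hu Hnu Hs Hns.
  pose proof b_pos.
  apply Rmult_le_reg_l with (b * b); [nra|].
  replace (b * b * (a * a * rho / (b * b) * vnorm (mapply (cprod P n i) sv)))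
    with (a * a * rho * vnorm (mapply (cprod P n i) sv)) by (field; lra).
  apply in_line_map in Hu as [x [Hx ->]]. apply in_line_map in Hs as [y [Hy ->]].
  destruct (preimage_unit_bounds i x Hnu) as [Hx1 _].
  destruct (preimage_unit_bounds i y Hns) as [_ Hy1].
  rewrite !(cprod_cohom P T Q Hcoh).
  set (j := (i + Z.of_nat n)%Z).
  pose proof (Hratio i x y Hx Hy) as Hr.
  pose proof (HQ_upper j (mapply (cprod T n i) y)).
  pose proof (HQ_lower j (mapply (cprod T n i) x)).
  pose proof (vnorm_ge0 x); pose proof (vnorm_ge0 y).
  pose proof (vnorm_ge0 (mapply (cprod T n i) x)); pose proof (vnorm_ge0 (mapply (cprod T n i) y)).
  set (tx := vnorm (mapply (cprod T n i) x)) in *. set (ty := vnorm (mapply (cprod T n i) y)) in *.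
  apply Rle_trans with (a * a * (b * b) * (rho * ty * vnorm x)).
  { replace (a * a * (b * b) * (rho * ty * vnorm x)) with (a * a * rho * (b * ty * (b * vnorm x)))
      by ring.
    apply Rmult_le_compat_l; [nra|].
    apply Rle_trans with (b * ty); [assumption|].
    rewrite <- (Rmult_1_r (b * ty)) at 1. apply Rmult_le_compat_l; nra. }
  apply Rle_trans with (a * a * (b * b) * (tx * vnorm y)); [apply Rmult_le_compat_l; nra|].
  replace (a * a * (b * b) * (tx * vnorm y)) with (b * b * ((a * tx) * (a * vnorm y))) by ring.
  apply Rmult_le_compat_l; [nra|].
  rewrite <- (Rmult_1_r (vnorm (mapply (Q j) (mapply (cprod T n i) x)))).
  apply Rmult_le_compat; nra.
Qed.

Lemma cohom_growth n L gamma :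
  0 <= gamma ->
  (forall i x, in_line (L i) x -> gamma * vnorm x <= vnorm (mapply (cprod T n i) x)) ->
  forall i w, in_line (conj_line L i) w -> vnorm w = 1 ->
    a * gamma / b <= vnorm (mapply (cprod P n i) w).
Proof.
  intros Hgamma Hgrowth i w Hw Hnw.
  apply in_line_map in Hw as [x [Hx ->]].
  destruct (preimage_unit_bounds i x Hnw) as [Hx1 _].
  rewrite (cprod_cohom P T Q Hcoh).
  pose proof (HQ_lower (i + Z.of_nat n)%Z (mapply (cprod T n i) x)).
  pose proof (Hgrowth i x Hx). pose proof b_pos.
  apply Rle_trans with (a * (gamma * vnorm x)); [|nra].
  apply Rmult_le_reg_l with b; [assumption|].
  replace (b * (a * gamma / b)) with (a * gamma * 1) by (field; lra).
  replace (b * (a * (gamma * vnorm x))) with (a * gamma * (b * vnorm x)) by ring.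
  apply Rmult_le_compat_l; nra.
Qed.

Theorem cohom_dominated_splitting : dominated_splitting T -> dominated_splitting P.
Proof.
  intros [Hbd [s [u [N [eta [HDS1 [HN [Heta [HDS2 [[delta [Hdelta HDS3]] [c [Hc HDS4]]]]]]]]]]]].
  assert (Hu : invariant_line T u) by (intro i; apply HDS1).
  assert (Hs : invariant_line T s) by (intro i; apply HDS1).
  pose proof b_pos as Hb.
  destruct (pow_exceeds eta (b * b / (a * a)) Heta) as [K [HK HetaK]].
  set (E := a * a * eta ^ K / (b * b)).
  assert (HE : 1 < E).
  { unfold E. apply Rmult_lt_reg_l with (b * b / (a * a)); [apply Rdiv_lt_0_compat; nra|].
    replace (b * b / (a * a) * (a * a * eta ^ K / (b * b))) with (eta ^ K) by (field; lra).
    lra. }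
  set (gamma := c * delta / 2).
  assert (Hgamma : 0 < a * gamma ^ K / b)
    by (apply Rdiv_lt_0_compat; [apply Rmult_lt_0_compat; [lra | apply pow_lt; unfold gamma; nra]
                                | lra]).
  pose proof (cohom_ratio (K * N) u s (eta ^ K) ltac:(apply pow_le; lra)
                (dominates_iter T u s N eta Hu Hs HDS2 ltac:(lra) K)) as Hratio.
  pose proof (cohom_growth (K * N) u (gamma ^ K) ltac:(apply pow_le; unfold gamma; nra)
                (dominates_growth T u s N eta delta c Hu HDS2 ltac:(lra) ltac:(lra) ltac:(lra)
                   HDS3 HDS4 K)) as Hgrowth.
  split; [apply cohom_bounded, Hbd|].
  exists (conj_line s), (conj_line u), (K * N)%nat, ((1 + E) / 2).
  split; [|split; [|split; [|split; [|split]]]].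
  - intro i. split; apply conj_line_invariant; assumption.
  - lia.
  - lra.
  - exact (dominates_of_le P _ _ _ E _ HE Hgamma Hratio Hgrowth).
  - assert (0 < a * a / (b * b)) by (apply Rdiv_lt_0_compat; nra).
    exists (a * a / (b * b) * delta). split; [nra|].
    intro i. pose proof (conj_line_dist u s i). pose proof (HDS3 i). nra.
  - exists (a * gamma ^ K / b). split; [assumption|].
    intro i. eapply Rle_trans; [apply (Hgrowth i _ (urep_line _) (urep_unit _))|].
    apply opnorm_ge, urep_unit.
Qed.

End Cohomologous.

Lemma vnorm_minv_bounds A a b :
  0 < a -> mdet A <> 0 ->
  (forall v, a * vnorm v <= vnorm (mapply A v)) -> (forall v, vnorm (mapply A v) <= b * vnorm v) ->
  (forall v, / b * vnorm v <= vnorm (mapply (minv A) v)) /\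
  (forall v, vnorm (mapply (minv A) v) <= / a * vnorm v).
Proof.
  intros Ha HA Hlow Hup.
  assert (Hb : 0 < b)
    by (pose proof (Hlow (1, 0)); pose proof (Hup (1, 0)); rewrite vnorm_e1 in *; lra).
  split; intro v.
  - pose proof (Hup (mapply (minv A) v)) as H. rewrite mapply_minv_r in H by exact HA.
    apply Rmult_le_reg_l with b; [exact Hb|]. rewrite <- Rmult_assoc, Rinv_r, Rmult_1_l; lra.
  - pose proof (Hlow (mapply (minv A) v)) as H. rewrite mapply_minv_r in H by exact HA.
    apply Rmult_le_reg_l with a; [exact Ha|]. rewrite <- Rmult_assoc, Rinv_r, Rmult_1_l; lra.
Qed.

Theorem lemma3p13 (P T Q : Z -> mat) :
  (forall i, inGL2 (P i)) -> (forall i, inGL2 (T i)) -> (forall i, inGL2 (Q i)) ->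
  (forall i, P i = mmul (Q (i + 1)%Z) (mmul (T i) (minv (Q i)))) ->
  (exists C1 C2 : R, 0 < C2 /\
     forall i, C1 > sing1 (Q i) /\ sing1 (Q i) >= sing2 (Q i) /\ sing2 (Q i) > C2) ->
  (dominated_splitting P <-> dominated_splitting T).
Proof.
  intros _ _ HQ Hcoh [C1 [C2 [HC2 Hsing]]].
  assert (HQb : forall i v, C2 * vnorm v <= vnorm (mapply (Q i) v) <= C1 * vnorm v)
    by (intros i v; destruct (Hsing i) as [H1 [_ H2]]; apply sing_bounds_lt; lra).
  pose proof (fun i v => proj1 (HQb i v)) as Hlow; pose proof (fun i v => proj2 (HQb i v)) as Hup.
  assert (HPT : forall i v, mapply (P i) (mapply (Q i) v) = mapply (Q (i + 1)%Z) (mapply (T i) v))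
    by (intros; rewrite Hcoh, !mapply_mmul, mapply_minv_l by apply HQ; reflexivity).
  assert (HTP : forall i v,
             mapply (T i) (mapply (minv (Q i)) v) = mapply (minv (Q (i + 1)%Z)) (mapply (P i) v))
    by (intros; rewrite Hcoh, !mapply_mmul, mapply_minv_l by apply HQ; reflexivity).
  assert (HC1 : 0 < C1).
  { destruct (Hsing 0%Z) as [H _]. enough (0 <= sing1 (Q 0%Z)) by lra. apply sqrt_pos. }
  split; intro HD.
  - pose proof (fun i => vnorm_minv_bounds (Q i) C2 C1 HC2 (HQ i) (Hlow i) (Hup i)) as Hinv.
    apply (cohom_dominated_splitting T P (fun i => minv (Q i)) (/ C1) (/ C2)).
    + apply Rinv_0_lt_compat, HC1.
    + intro i. apply (proj1 (Hinv i)).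
    + intro i. apply (proj2 (Hinv i)).
    + exact HTP.
    + exact HD.
  - exact (cohom_dominated_splitting P T Q C2 C1 HC2 Hlow Hup HPT HD).
Qed.
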